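(* Let $A\in\mathbb{R}^{n\times n}$ be a lower Hessenberg invertible M-matrix, and let $(M,N)$ be a regular splitting of $A$ such that $M$ is a substitution matrix. Let $M_{AGS}=\operatorname{triu}(A)$ and $N_{AGS}=M_{AGS}-A$. Then \[ \rho(M^{-1}N) \geq \rho(M_{AGS}^{-1}N_{AGS}). \]
   Context: $A$ is lower Hessenberg if $A_{ij}=0$ whenever $j>i+1$. A regular splitting of $A$ is a pair $(M,N)$ with $M$ an invertible M-matrix, $N\geq 0$ entrywise, and $A=M-N$. A permutation $v=(i_1,\dots,i_n)$ of $(1,\dots,n)$ is a substitution order for $M\in\mathbb{R}^{n\times n}$ if $M_{ij}=0$ whenever $j$ comes after $i$ in the list $v$; $M$ is a substitution matrix if it admits a substitution order. $\operatorname{triu}(A)$ is the upper triangular part of $A$ including the diagonal. $\rho(\cdot)$ denotes the spectral radius. *)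

From HB Require Import structures.
From mathcomp Require Import all_boot all_order all_algebra all_fingroup.
From mathcomp Require Import complex.
Set Implicit Arguments. Unset Strict Implicit. Unset Printing Implicit Defensive.
Import Order.TTheory GRing.Theory Num.Theory.
Local Open Scope ring_scope.

Section Defs.
Variable R : rcfType.
Variable n : nat.

Definition cmx (A : 'M[R]_n) : 'M[R[i]]_n := map_mx (fun x : R => x%:C%C) A.

Definition eigenvalues (A : 'M[R]_n) : seq R[i] :=
  sval (closed_field_poly_normal (char_poly (cmx A))).

Definition spectral_radius (A : 'M[R]_n) : R :=
  \big[Num.max/0]_(z <- eigenvalues A) complex.Re `|z|.

Definition nonneg_mx (B : 'M[R]_n) : Prop := forall i j, 0 <= B i j.

Definition inv_Mmatrix (A : 'M[R]_n) : Prop :=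
  exists (s : R) (B : 'M[R]_n),
    nonneg_mx B /\ A = s%:M - B /\ spectral_radius B < s.

Definition lower_hessenberg (A : 'M[R]_n) : Prop :=
  forall i j : 'I_n, (i.+1 < j)%N -> A i j = 0.

Definition regular_splitting (A M N : 'M[R]_n) : Prop :=
  inv_Mmatrix M /\ nonneg_mx N /\ A = M - N.

(* The permutation s : 'S_n encodes the list v = (s 0, s 1, ..., s (n-1));
   the position of k in v is s^-1 k.  v is a substitution order for M if
   M i j = 0 whenever j comes after i in v. *)
Definition substitution_order (M : 'M[R]_n) (s : 'S_n) : Prop :=
  forall i j : 'I_n, ((s^-1)%g i < (s^-1)%g j)%N -> M i j = 0.

Definition substitution_matrix (M : 'M[R]_n) : Prop :=
  exists s : 'S_n, substitution_order M s.

Definition triu (A : 'M[R]_n) : 'M[R]_n :=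
  \matrix_(i, j) (if (i <= j)%N then A i j else 0).

End Defs.

From HB Require Import structures.
From mathcomp Require Import all_boot all_order all_algebra all_fingroup.
From mathcomp Require Import complex polyrcf lra.
Import Order.TTheory GRing.Theory Num.Theory ComplexField.Normc.
Set Implicit Arguments. Unset Strict Implicit. Unset Printing Implicit Defensive.
Local Open Scope ring_scope.

(* Put T = M^-1 N.  Since the splitting is regular and A^-1 >= 0, rho(T) < 1, and for
   rho(T) < mu the matrix mu M - N = M (mu - T) has a nonnegative inverse, so some row
   p >= 0 satisfies p (mu M - N) = (1 ... 1).  Let c_i count the indices l < i for which
   l precedes l+1 in the substitution order of M.  Because A is lower Hessenberg, for
   0 < mu <= 1 the diagonal rescaling by mu^c_i turns mu M - N entrywise into something
   below mu triu(A) - (triu(A) - A); hence u_i = p_i mu^c_i satisfies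
   u (triu(A) - A) < mu u triu(A).  A Collatz-Wielandt argument for the pencil then bounds
   every eigenvalue of triu(A)^-1 (triu(A) - A) by mu, and mu can be taken arbitrarily close
   to rho(T).
   That (t - T)^-1 >= 0 when T >= 0 and t > rho(T) is shown without Perron-Frobenius: then
   det(s - T) > 0 for all s >= t, and induction on the size with Schur complements turns
   this into nonnegativity of the inverse. *)

Section RealPolynomials.
Variable R : rcfType.
Implicit Types (q f : {poly R}) (s t x y z : R).

Lemma monic_eventually_ge1 q : q \is monic -> exists x0, forall x, x0 <= x -> 1 <= q.[x].
Proof.
move=> mq; have := @poly_pinfty_gt_lc R q; rewrite (monicP mq) ltr01.
by case=> // x0 h; exists x0.
Qed.

Lemma monic_root_above q s : q \is monic -> q.[s] <= 0 -> exists2 r, s <= r & root q r.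
Proof.
move=> mq qs; have [x0 hx0] := monic_eventually_ge1 mq.
have sx : s <= Num.max s x0 by rewrite le_max lexx.
have q1 : 1 <= q.[Num.max s x0] by apply: hx0; rewrite le_max lexx orbT.
have hq : q.[s] <= 0 <= q.[Num.max s x0] by rewrite qs (le_trans ler01 q1).
by have [r /andP[sr _] rr] := poly_ivt sx hq; exists r.
Qed.

Lemma monic_gt0_above_roots q t : q \is monic ->
  (forall s, t <= s -> ~~ root q s) -> forall s, t <= s -> 0 < q.[s].
Proof.
move=> mq noroot s ts; rewrite ltNge; apply/negP => /(monic_root_above mq)[r sr rr].
by move: (noroot r (le_trans ts sr)); rewrite rr.
Qed.

Lemma monic_largest_root q s : q \is monic -> q.[s] <= 0 ->
  exists2 y, s <= y /\ root q y & forall z, y < z -> 0 < q.[z].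
Proof.
move=> mq /(monic_root_above mq)[r sr rr].
have rootsRE x : (x \in rootsR q) = root q x by rewrite -roots_on_rootsR ?monic_neq0.
set y := \big[Num.max/r]_(x <- rootsR q) x.
have le_y x : root q x -> x <= y by move=> rx; apply: le_bigmax_seq; rewrite ?rootsRE.
have ry : root q y.
  rewrite /y big_seq; elim/big_rec: _ => // x m; rewrite rootsRE => rx rm.
  by rewrite /Num.max; case: ifP.
exists y; first by split=> //; apply: le_trans sr (le_y r rr).
move=> z yz; apply: (monic_gt0_above_roots mq _ (lexx z)) => x zx.
by apply: contraTN (lt_le_trans yz zx) => /le_y; rewrite leNgt => /negbTE ->.
Qed.

Lemma poly_le0_right_limit f y : (forall z, y < z -> f.[z] <= 0) -> f.[y] <= 0.
Proof.
move=> hf; rewrite leNgt; apply/negP => fy.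
have [d d0 hd] := poly_cont y f fy.
have := hd (y + d / 2); rewrite addrAC subrr add0r ger0_norm ?ltr_distl; last lra.
have := hf (y + d / 2); lra.
Qed.

End RealPolynomials.

Section NonnegativeInverse.
Variable R : rcfType.

Definition nonnegmx m p (X : 'M[R]_(m, p)) := forall i j, 0 <= X i j.

Definition Zmatrix n (A : 'M[R]_n) := forall i j, i != j -> A i j <= 0.

Lemma nonnegmxM m p r (X : 'M[R]_(m, p)) (Y : 'M[R]_(p, r)) :
  nonnegmx X -> nonnegmx Y -> nonnegmx (X *m Y).
Proof. by move=> hX hY i j; rewrite mxE; apply: sumr_ge0 => k _; apply: mulr_ge0. Qed.

Lemma nonnegmxD m p (X Y : 'M[R]_(m, p)) :
  nonnegmx X -> nonnegmx Y -> nonnegmx (X + Y).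
Proof. by move=> hX hY i j; rewrite mxE; apply: addr_ge0. Qed.

Lemma nonnegmx1 n : nonnegmx (1%:M : 'M[R]_n).
Proof. by move=> i j; rewrite mxE ler0n. Qed.

Lemma nonnegmx_submx m1 m2 n1 n2 (X : 'M[R]_(m1 + m2, n1 + n2)) : nonnegmx X ->
  [/\ nonnegmx (ulsubmx X), nonnegmx (ursubmx X), nonnegmx (dlsubmx X)
     & nonnegmx (drsubmx X)].
Proof. by move=> nX; split=> i j; rewrite !mxE. Qed.

Lemma horner_char_poly n (A : 'M[R]_n) s : (char_poly A).[s] = \det (s%:M - A).
Proof.
symmetry; rewrite horner_sum; apply: eq_bigr => p _.
rewrite hornerM horner_exp !hornerE; congr (_ * _).
rewrite (big_morph _ (fun p q => hornerM p q s) (hornerC 1 s)).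
by apply: eq_bigr => i _; rewrite !mxE !(hornerE, hornerMn).
Qed.

Lemma det_Zblock n (a : 'M[R]_1) (b : 'M[R]_(1, n)) (c : 'M[R]_(n, 1)) (D : 'M[R]_n) :
  D \in unitmx ->
  \det (block_mx a (- b) (- c) D) = \det D * (a - b *m invmx D *m c) 0 0.
Proof.
move=> uD; set S := a - b *m invmx D *m c.
have -> : block_mx a (- b) (- c) D =
          block_mx 1%:M (- b *m invmx D) 0 1%:M *m block_mx S 0 (- c) D.
  rewrite mulmx_block !mul1mx !mul0mx !add0r mulmxKV //.
  by rewrite /S !mulNmx mulmxN opprK subrK.
by rewrite det_mulmx det_ublock det_lblock !det1 !mul1r mulrC {1}[S]mx11_scalar det_scalar1.
Qed.

Lemma scalar_sub_block n (T : 'M[R]_(1 + n)) s :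
  s%:M - T = block_mx (s%:M - ulsubmx T) (- ursubmx T) (- dlsubmx T) (s%:M - drsubmx T).
Proof.
by rewrite -{1}[T]submxK (scalar_mx_block 1 n) opp_block_mx add_block_mx !add0r.
Qed.

Lemma det_scalar_sub_block n (T : 'M[R]_(1 + n)) s : (s%:M - drsubmx T) \in unitmx ->
  \det (s%:M - T) = \det (s%:M - drsubmx T) *
    (s - ulsubmx T 0 0 - (ursubmx T *m invmx (s%:M - drsubmx T) *m dlsubmx T) 0 0).
Proof. by move=> uD; rewrite scalar_sub_block det_Zblock // !mxE eqxx mulr1n. Qed.

Lemma Zblock_monotone n p (a : 'M[R]_1) (b : 'M[R]_(1, n)) (c : 'M[R]_(n, 1))
    (D : 'M[R]_n) (x : 'M[R]_(1 + n, p)) :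
  nonnegmx b -> nonnegmx c -> D \in unitmx -> nonnegmx (invmx D) ->
  0 < (a - b *m invmx D *m c) 0 0 ->
  nonnegmx (block_mx a (- b) (- c) D *m x) -> nonnegmx x.
Proof.
move=> nb nc uD nW hS; set W := invmx D in nW hS *.
rewrite -[x]vsubmxK mul_block_col; set x0 := usubmx x; set x' := dsubmx x => nv.
set v0 := a *m x0 + - b *m x'; set v' := - c *m x0 + D *m x'.
have nv0 : nonnegmx v0 by move=> i j; have := nv (lshift n i) j; rewrite col_mxEu.
have nv' : nonnegmx v' by move=> i j; have := nv (rshift 1 i) j; rewrite col_mxEd.
have ex' : x' = W *m (v' + c *m x0) by rewrite /v' mulNmx addrAC addNr add0r mulKmx.
have ex0 : (a - b *m W *m c) *m x0 = v0 + b *m W *m v'.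
  rewrite /v0 /v' mulmxDr !mulNmx !mulmxA mulmxKV // mulmxBl mulmxN.
  by rewrite [- _ + _]addrC addrA subrK mulmxA.
have nx0 : nonnegmx x0.
  move=> i j; rewrite (ord1 i).
  have := nonnegmxD nv0 (nonnegmxM (nonnegmxM nb nW) nv') 0 j.
  by rewrite -ex0 mxE big_ord1 pmulr_rge0.
have nx' : nonnegmx x' by rewrite ex'; apply/nonnegmxM/nonnegmxD/nonnegmxM.
by move=> i j; case: (split_ordP i) => k ->; rewrite ?col_mxEu ?col_mxEd.
Qed.

Lemma Zblock_inv_nonneg n (a : 'M[R]_1) (b : 'M[R]_(1, n)) (c : 'M[R]_(n, 1))
    (D : 'M[R]_n) : nonnegmx b -> nonnegmx c -> D \in unitmx -> nonnegmx (invmx D) ->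
  0 < (a - b *m invmx D *m c) 0 0 ->
  let X := block_mx a (- b) (- c) D in X \in unitmx /\ nonnegmx (invmx X).
Proof.
move=> nb nc uD nW hS X.
have uX : X \in unitmx.
  by rewrite unitmxE /X det_Zblock // unitfE mulf_neq0 ?(gt_eqF hS) // -unitfE -unitmxE.
split=> //; apply: (Zblock_monotone nb nc uD nW hS).
by rewrite mulmxV //; apply: nonnegmx1.
Qed.

Lemma trailing_det_pos n (T : 'M[R]_(1 + n)) t : nonnegmx T ->
  (forall z, (forall s, z <= s -> 0 < \det (s%:M - drsubmx T)) ->
     (z%:M - drsubmx T) \in unitmx /\ nonnegmx (invmx (z%:M - drsubmx T))) ->
  (forall s, t <= s -> 0 < \det (s%:M - T)) ->
  forall s, t <= s -> 0 < \det (s%:M - drsubmx T).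
Proof.
(* f = chi_T - (X - a) chi_D is -b adj(X - D) c: positive at the largest real root y of
   chi_D, but nonpositive right of y, where (X - D)^-1 >= 0 by the second hypothesis. *)
move=> /nonnegmx_submx[_ nb nc _] hD hT s ts; rewrite ltNge; apply/negP.
rewrite -horner_char_poly => /(monic_largest_root (char_poly_monic _))[y [sy ry] hy].
set D := drsubmx T in hD hy *; set a := ulsubmx T 0 0.
pose f := char_poly T - ('X - a%:P) * char_poly D.
suff : f.[y] <= 0.
  by rewrite !hornerE (rootP ry) mulr0 subr0 horner_char_poly leNgt hT // (le_trans ts sy).
apply: poly_le0_right_limit => z yz.
have hz s' : z <= s' -> 0 < \det (s'%:M - D).
  by move=> zs'; rewrite -horner_char_poly hy // (lt_le_trans yz zs').
have [uz nz] := hD z hz.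
rewrite !hornerE !horner_char_poly det_scalar_sub_block // -/a.
have := nonnegmxM (nonnegmxM nb nz) nc 0 0.
have := hz z (lexx z); nra.
Qed.

Lemma det_pos_inv_nonneg n (T : 'M[R]_n) t : nonnegmx T ->
  (forall s, t <= s -> 0 < \det (s%:M - T)) ->
  (t%:M - T) \in unitmx /\ nonnegmx (invmx (t%:M - T)).
Proof.
elim: n T t => [|n IH] T t nT hT.
  by split; [rewrite unitmxE det_mx00 unitr1 | case].
have [_ nb nc nD] := @nonnegmx_submx 1 n 1 n T nT.
have hD := trailing_det_pos nT (fun z => IH _ z nD) hT.
have [uW nW] := IH _ t nD hD.
rewrite scalar_sub_block; apply: Zblock_inv_nonneg => //.
have := hT t (lexx t).
by rewrite scalar_sub_block det_Zblock // pmulr_rgt0 ?hD.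
Qed.

End NonnegativeInverse.

Section Spectrum.
Variable R : rcfType.

Lemma normc_real (r : R) : normc r%:C%C = `|r|.
Proof. by rewrite /normc /= expr0n addr0 sqrtr_sqr. Qed.

Lemma normc_ge0 (x : R[i]) : 0 <= normc x.
Proof. exact: (@normr_ge0 _ (Rcomplex R)). Qed.

Lemma normc_gt0 (x : R[i]) : (0 < normc x) = (x != 0).
Proof. exact: (@normr_gt0 _ (Rcomplex R)). Qed.

Lemma normc_sum (I : Type) (r : seq I) (P : pred I) (F : I -> R[i]) :
  normc (\sum_(i <- r | P i) F i) <= \sum_(i <- r | P i) normc (F i).
Proof. exact: (@ler_norm_sum _ (Rcomplex R)). Qed.

Lemma mem_eigenvalues n (A : 'M[R]_n) z :
  (z \in eigenvalues A) = root (char_poly (cmx A)) z.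
Proof.
rewrite /eigenvalues; case: closed_field_poly_normal => r /= ->.
by rewrite (monicP (char_poly_monic _)) scale1r root_prod_XsubC.
Qed.

Lemma real_root_eigenvalue n (A : 'M[R]_n) s :
  root (char_poly A) s -> s%:C%C \in eigenvalues A.
Proof.
move=> /rootP hs.
by rewrite mem_eigenvalues /cmx -map_char_poly rootE horner_map hs rmorph0.
Qed.

Lemma le_spectral_radius n (A : 'M[R]_n) z :
  z \in eigenvalues A -> normc z <= spectral_radius A.
Proof. by move=> hz; apply: le_bigmax_seq. Qed.

Lemma spectral_radius_ge0 n (A : 'M[R]_n) : 0 <= spectral_radius A.
Proof. exact: bigmax_ge_id. Qed.

Lemma spectral_radius_lt n (A : 'M[R]_n) mu : 0 < mu ->
  (forall z, z \in eigenvalues A -> normc z < mu) -> spectral_radius A < mu.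
Proof. by move=> mu0 hA; rewrite /spectral_radius big_seq; apply: bigmax_lt. Qed.

Lemma rho_lt_inv_nonneg n (T : 'M[R]_n) t : nonnegmx T -> spectral_radius T < t ->
  (t%:M - T) \in unitmx /\ nonnegmx (invmx (t%:M - T)).
Proof.
move=> nT rT; apply: det_pos_inv_nonneg => // s ts; rewrite -horner_char_poly.
apply: (monic_gt0_above_roots (char_poly_monic T) _ ts) => r tr.
apply/negP => /real_root_eigenvalue/le_spectral_radius; rewrite normc_real.
by have := ler_norm r; lra.
Qed.

Lemma inv_Mmatrix_inv_nonneg n (A : 'M[R]_n) :
  inv_Mmatrix A -> A \in unitmx /\ nonnegmx (invmx A).
Proof. by case=> s [B [nB [-> rB]]]; apply: rho_lt_inv_nonneg. Qed.

Lemma inv_Mmatrix_Z n (A : 'M[R]_n) : inv_Mmatrix A -> Zmatrix A.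
Proof.
by case=> s [B [nB [-> _]]] i j ij; rewrite !mxE (negPf ij) mulr0n sub0r oppr_le0.
Qed.

End Spectrum.

Section Pencil.
Variables (R : rcfType) (n : nat).
Implicit Types (U L : 'M[R]_n) (u : 'rV[R]_n) (w : 'rV[R[i]]_n).

Lemma eigenvalue_pencil U L z : U \in unitmx ->
  z \in eigenvalues (invmx U *m L) ->
  exists2 w : 'rV[R[i]]_n, w != 0 & w *m cmx L = z *: (w *m cmx U).
Proof.
move=> uU; rewrite mem_eigenvalues -eigenvalue_root_char => /eigenvalueP[v hv v0].
have uC : cmx U \in unitmx by rewrite map_unitmx.
exists (v *m invmx (cmx U)).
  by apply: contra v0 => /eqP w0; rewrite -(mulmxKV uC v) w0 mul0mx.
by rewrite mulmxKV // -mulmxA -map_invmx -map_mxM hv.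
Qed.

Lemma Zmatrix_row_pos U u j : Zmatrix U -> nonnegmx u ->
  0 < (u *m U) 0 j -> 0 < u 0 j /\ 0 < U j j.
Proof.
move=> ZU u0 uUj.
have : (u *m U) 0 j <= u 0 j * U j j.
  rewrite mxE (bigD1 j) //= gerDl; apply: sumr_le0 => k kj.
  by apply: mulr_ge0_le0; rewrite ?ZU.
move=> /(lt_le_trans uUj); have := u0 0 j; rewrite le_eqVlt => /predU1P[<-|uj].
  by rewrite mul0r ltxx.
by rewrite pmulr_rgt0.
Qed.

Lemma row_max_ratio w u : w != 0 -> (forall j, 0 < u 0 j) ->
  exists i, exists2 c, 0 < c &
    (forall j, normc (w 0 j) <= c * u 0 j) /\ normc (w 0 i) = c * u 0 i.
Proof.
move=> w0 upos; have [j0 wj0] : exists j0, w 0 j0 != 0.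
  apply/existsP; apply: contraR w0 => /existsPn wz.
  by apply/eqP/matrixP => i j; rewrite ord1 mxE; apply/eqP/negPn.
pose F j := normc (w 0 j) / u 0 j.
have [i _ hi] := @arg_maxP _ _ _ j0 predT F isT.
exists i, (F i); last split.
- by apply: lt_le_trans (hi j0 isT); rewrite divr_gt0 ?normc_gt0.
- by move=> j; rewrite -ler_pdivrMr //; apply: hi.
- by rewrite divfK // gt_eqF.
Qed.

Lemma pencil_eigenvalue_lt U L u mu z w : Zmatrix U -> nonnegmx L ->
  (forall j, 0 < u 0 j) -> 0 < mu ->
  (forall j, (u *m L) 0 j < mu * (u *m U) 0 j) ->
  w != 0 -> w *m cmx L = z *: (w *m cmx U) -> normc z < mu.
Proof.
(* For i maximizing |w_j| / u_j, column i of w L = z w U gives |z| (u U)_i <= (u L)_i. *)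
move=> ZU nL upos mu0 hLU w0 hw.
have [i [c c0 [hc wi]]] := row_max_ratio w0 upos.
set P := \sum_(j | j != i) u 0 j * - U j i.
have uUi : (u *m U) 0 i = u 0 i * U i i - P.
  rewrite mxE (bigD1 i) //= /P -sumrN; congr (_ + _).
  by apply: eq_bigr => j _; rewrite mulrN opprK.
have col_i : z * (w 0 i * cmx U i i) =
    \sum_j w 0 j * cmx L j i - z * \sum_(j | j != i) w 0 j * cmx U j i.
  have := congr1 (fun v : 'rV_n => v 0 i) hw; rewrite !mxE [in RHS](bigD1 i) //=.
  by rewrite mulrDr => ->; rewrite addrK /cmx mxE.
have hSL : normc (\sum_j w 0 j * cmx L j i) <= c * (u *m L) 0 i.
  apply: le_trans (normc_sum _ _ _) _; rewrite mxE mulr_sumr; apply: ler_sum => j _.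
  by rewrite normcM /cmx mxE normc_real ger0_norm // mulrA ler_wpM2r.
have hSU : normc (\sum_(j | j != i) w 0 j * cmx U j i) <= c * P.
  apply: le_trans (normc_sum _ _ _) _; rewrite mulr_sumr; apply: ler_sum => j ji.
  by rewrite normcM /cmx mxE normc_real ler0_norm ?ZU // mulrA ler_wpM2r ?oppr_ge0 ?ZU.
have key : normc z * (u *m U) 0 i <= (u *m L) 0 i.
  have : normc z * (c * u 0 i) * `|U i i| <= c * (u *m L) 0 i + normc z * (c * P).
    have := congr1 (@normc R) col_i; rewrite {1}/cmx mxE !normcM normc_real wi mulrA => ->.
    apply: le_trans (le_normcD _ _) _; rewrite normcN normcM.
    by apply: lerD => //; apply: ler_wpM2l; rewrite ?normc_ge0.
  have : normc z * c * u 0 i * U i i <= normc z * c * u 0 i * `|U i i|.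
    by rewrite ler_wpM2l ?ler_norm // !mulr_ge0 ?normc_ge0 ?ltW.
  move=> h1 h2; rewrite uUi -(ler_pM2l c0); lra.
have uLi : 0 <= (u *m L) 0 i.
  by apply: nonnegmxM => // k j; rewrite (ord1 k) ltW.
rewrite ltNge; apply/negP => muz.
have := hLU i; have := normc_ge0 z; nra.
Qed.

Lemma pencil_row_pos U L u mu j : Zmatrix U -> nonnegmx L -> nonnegmx u -> 0 < mu ->
  (u *m L) 0 j < mu * (u *m U) 0 j -> 0 < u 0 j /\ 0 < U j j.
Proof.
move=> ZU nL nu mu0 hLU; apply: Zmatrix_row_pos => //.
by rewrite -(pmulr_rgt0 _ mu0); apply: le_lt_trans (nonnegmxM nu nL 0 j) hLU.
Qed.

Lemma pencil_rho_lt U L u mu : U \in unitmx -> Zmatrix U -> nonnegmx L ->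
  nonnegmx u -> 0 < mu -> (forall j, (u *m L) 0 j < mu * (u *m U) 0 j) ->
  spectral_radius (invmx U *m L) < mu.
Proof.
move=> uU ZU nL nu mu0 hLU.
have upos j : 0 < u 0 j by have [] := pencil_row_pos ZU nL nu mu0 (hLU j).
apply: spectral_radius_lt => // z /(eigenvalue_pencil uU)[w w0 hw].
exact: pencil_eigenvalue_lt hw.
Qed.

End Pencil.

Section SubstitutionOrder.
Variables (R : rcfType) (n : nat) (sg : 'S_n).

(* Position of l in the order encoded by sg; junk value 0 when n <= l. *)
Definition pos (l : nat) : nat :=
  if insub l is Some o then val ((sg^-1)%g o) else 0.

Definition ascent (l : nat) : bool := (l.+1 < n)%N && (pos l < pos l.+1)%N.

Definition nascents (k : nat) : nat := \sum_(0 <= l < k) ascent l.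

Lemma posE (o : 'I_n) : pos o = (sg^-1)%g o.
Proof. by rewrite /pos valK. Qed.

Lemma pos_inj (i j : 'I_n) : pos i = pos j -> i = j.
Proof. by rewrite !posE => /val_inj/perm_inj. Qed.

Lemma nascents_split a b : (a <= b)%N ->
  nascents b = (nascents a + \sum_(a <= l < b) ascent l)%N.
Proof. by move=> ab; rewrite /nascents (@big_cat_nat _ _ _ a 0 b) //=. Qed.

Lemma pos_le_no_ascent j i : (j <= i < n)%N ->
  (\sum_(j <= l < i) ascent l)%N = 0%N -> (pos i <= pos j)%N.
Proof.
elim: i => [|i IH] /andP[ji i_lt]; first by move: ji; rewrite leqn0 => /eqP ->.
have [<- //|ij] := eqVneq j i.+1.
have {}ji : (j <= i)%N by rewrite -ltnS ltn_neqAle ij.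
rewrite big_nat_recr //= => /eqP; rewrite addn_eq0 => /andP[/eqP none].
rewrite eqb0 /ascent i_lt /= -leqNgt => /leq_trans; apply.
by apply: IH; rewrite // ji ltnW.
Qed.

Variables (A M N : 'M[R]_n) (mu : R).
Hypotheses (hessA : lower_hessenberg A) (ZA : Zmatrix A)
  (hsg : substitution_order M sg) (nN : nonnegmx N) (eA : A = M - N)
  (mu0 : 0 < mu) (mu1 : mu <= 1).

Lemma scaled_splitting_le (i j : 'I_n) : (mu *: M - N) i j <= mu * A i j.
Proof.
have := mulr_ge0 (nN i j) (_ : 0 <= 1 - mu); rewrite subr_ge0 eA !mxE => /(_ mu1); lra.
Qed.

Lemma scaled_splitting_before (i j : 'I_n) : (pos i < pos j)%N -> (mu *: M - N) i j = A i j.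
Proof. by rewrite !posE eA !mxE => /hsg ->; rewrite mulr0 sub0r. Qed.

Lemma triu_pencilE (i j : 'I_n) : (mu *: triu A - (triu A - A)) i j =
  if (i <= j)%N then mu * A i j else A i j.
Proof. by rewrite !mxE; case: ifP => _; lra. Qed.

Lemma pencil_diag_scaling_le (i j : 'I_n) :
  (mu *: M - N) i j * mu ^+ nascents j <=
  (mu *: triu A - (triu A - A)) i j * mu ^+ nascents i.
Proof.
(* Where pos i < pos j the two sides agree up to the weights since M i j = 0; between
   j < i each ascent costs a factor mu, and above the diagonal only j = i + 1 survives. *)
have pow_ge0 k : 0 <= mu ^+ k by rewrite exprn_ge0 ?ltW.
have le_muA := scaled_splitting_le i j.
rewrite triu_pencilE; case: (ltngtP i j) => [ij|ji|/val_inj ->]; last first.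
- by rewrite ler_wpM2r ?scaled_splitting_le.
- rewrite /= (nascents_split (ltnW ji)).
  have [no_asc|some_asc] := eqVneq (\sum_(j <= l < i) ascent l)%N 0%N.
    rewrite no_asc addn0 scaled_splitting_before // ltn_neqAle.
    have ji_n : (j <= i < n)%N by rewrite (ltnW ji) ltn_ord.
    rewrite (pos_le_no_ascent ji_n no_asc) andbT.
    by apply: contraTneq ji => /pos_inj ->; rewrite ltnn.
  have ZAij : A i j <= 0 by apply: ZA; apply: contraTneq ji => ->; rewrite ltnn.
  apply: (le_trans (ler_wpM2r (pow_ge0 _) le_muA)).
  rewrite exprD [mu * _]mulrC -mulrA ler_wnM2l // mulrC ler_wpM2r //.
  have S_pos : (0 < \sum_(j <= l < i) ascent l)%N by rewrite lt0n.
  by rewrite -(prednK S_pos) exprS ler_piMr ?exprn_ile1 ?(ltW mu0).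
- have [far|near] := ltnP i.+1 j.
    move: le_muA; rewrite hessA // !mulr0 mul0r => le0.
    by rewrite mulr_le0_ge0.
  have ej : val j = i.+1 by apply/eqP; rewrite eqn_leq near ij.
  rewrite (nascents_split (ltnW ij)) ej big_nat1.
  have -> : ascent i = (pos i < pos j)%N by rewrite /ascent -ej ltn_ord.
  case: (boolP (pos i < pos j)%N) => [before|_]; last by rewrite addn0 ler_wpM2r.
  by rewrite scaled_splitting_before // addn1 exprS mulrA [A i j * mu]mulrC.
Qed.

End SubstitutionOrder.

Section Splittings.
Variables (R : rcfType) (n : nat).
Implicit Types (A M N : 'M[R]_n).

Lemma triu_Zmatrix A : Zmatrix A -> Zmatrix (triu A).
Proof. by move=> ZA i j ij; rewrite mxE; case: ifP => // _; apply: ZA. Qed.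

Lemma triu_sub_nonneg A : Zmatrix A -> nonnegmx (triu A - A).
Proof.
move=> ZA i j; rewrite !mxE; case: ifP => [_|ji]; first by rewrite subrr.
by rewrite sub0r oppr_ge0 ZA //; apply: contraFneq ji => ->.
Qed.

Lemma triu_unitmx A : (forall i, A i i != 0) -> triu A \in unitmx.
Proof.
move=> A0; rewrite -unitmx_tr unitmxE unitfE det_trig.
  by rewrite prodf_seq_neq0; apply/allP => i _; rewrite !mxE leqnn A0.
by apply/is_trig_mxP => i j ij; rewrite !mxE leqNgt ij.
Qed.

Lemma splitting_left_solution M N mu : M \in unitmx -> nonnegmx (invmx M) ->
  nonnegmx N -> spectral_radius (invmx M *m N) < mu ->
  exists2 p : 'rV[R]_n, nonnegmx p & p *m (mu *: M - N) = const_mx 1.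
Proof.
move=> uM nM nN rT; have [uW nW] := rho_lt_inv_nonneg (nonnegmxM nM nN) rT.
exists (const_mx 1 *m invmx (mu%:M - invmx M *m N) *m invmx M).
  by apply: nonnegmxM (nonnegmxM _ nW) nM => i j; rewrite mxE ler01.
have -> : mu *: M - N = M *m (mu%:M - invmx M *m N).
  by rewrite mulmxBr mul_mx_scalar mulKVmx.
by rewrite mulmxA mulmxKV // mulmxKV.
Qed.

Lemma regular_splitting_rho_lt1 A M N : A \in unitmx -> nonnegmx (invmx A) ->
  M \in unitmx -> nonnegmx (invmx M) -> nonnegmx N -> A = M - N ->
  spectral_radius (invmx M *m N) < 1.
Proof.
move=> uA nA uM nM nN eA.
pose one : 'rV[R]_n := const_mx 1; have n1 : nonnegmx one by move=> i j; rewrite mxE.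
have nAN : nonnegmx (one *m invmx A *m N) by apply/nonnegmxM/nN/nonnegmxM.
have eu : one *m invmx A *m M = one + one *m invmx A *m N.
  by rewrite -[M](subrK N) -eA mulmxDr mulmxKV.
rewrite -[invmx M *m N]mul1mx -invmx1.
apply: (@pencil_rho_lt _ _ _ _ (one *m invmx A *m M)) => //.
- exact: unitmx1.
- by move=> i j ij; rewrite mxE (negPf ij).
- exact: nonnegmxM.
- by rewrite eu; apply: nonnegmxD.
- move=> j; rewrite mulmx1 mul1r mulmxA mulmxK // eu.
  by rewrite [in X in _ < X]mxE ltrDr mxE ltr01.
Qed.

Lemma triu_splitting_rho_lt A M N sg mu :
  lower_hessenberg A -> Zmatrix A -> substitution_order M sg ->
  M \in unitmx -> nonnegmx (invmx M) -> nonnegmx N -> A = M - N ->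
  spectral_radius (invmx M *m N) < mu -> mu <= 1 ->
  spectral_radius (invmx (triu A) *m (triu A - A)) < mu.
Proof.
move=> hessA ZA hsg uM nM nN eA rT mu1.
have mu0 : 0 < mu := le_lt_trans (spectral_radius_ge0 _) rT.
have [p np hp] := splitting_left_solution uM nM nN rT.
pose u := \row_k (p 0 k * mu ^+ nascents sg k).
have nu : nonnegmx u.
  by move=> i k; rewrite mxE; apply: mulr_ge0 (np _ _) (exprn_ge0 _ (ltW mu0)).
have hLU j : (u *m (triu A - A)) 0 j < mu * (u *m triu A) 0 j.
  have : mu ^+ nascents sg j <= (u *m (mu *: triu A - (triu A - A))) 0 j.
    have e1 : (p *m (mu *: M - N)) 0 j = 1 by rewrite hp mxE.
    rewrite -[leLHS]mul1r -[X in X * _]e1 !mxE mulr_suml.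
    apply: ler_sum => i _; rewrite [u 0 i]mxE -!mulrA [_ ^+ nascents sg i * _]mulrC.
    by rewrite ler_wpM2l // pencil_diag_scaling_le.
  rewrite mulmxBr -scalemxAr !mxE => h.
  by have := exprn_gt0 (nascents sg j) mu0; lra.
have ZU := triu_Zmatrix ZA; have nL := triu_sub_nonneg ZA.
have uU : triu A \in unitmx.
  apply: triu_unitmx => i; have [_] := pencil_row_pos ZU nL nu mu0 (hLU i).
  by rewrite mxE leqnn => /gt_eqF ->.
exact: pencil_rho_lt uU ZU nL nu mu0 hLU.
Qed.

End Splittings.

Unset Implicit Arguments.

Theorem theorem5 (R : rcfType) (n : nat) (A M N : 'M[R]_n) :
  lower_hessenberg A -> inv_Mmatrix A ->
  regular_splitting A M N -> substitution_matrix M ->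
  spectral_radius (invmx (triu A) *m (triu A - A))
    <= spectral_radius (invmx M *m N).
Proof.
move=> hessA MA [MM [nN eA]] [sg hsg].
have [uA nA] := inv_Mmatrix_inv_nonneg MA.
have [uM nM] := inv_Mmatrix_inv_nonneg MM.
have rT1 := regular_splitting_rho_lt1 uA nA uM nM nN eA.
have rGS := triu_splitting_rho_lt hessA (inv_Mmatrix_Z MA) hsg uM nM nN eA.
apply: gt_ge => x rTx; have [x1|x1] := leP x 1; first exact: rGS.
exact: lt_trans (rGS 1 rT1 (lexx 1)) x1.
Qed.
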